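(* Let $A$ be a finite direct product of elementary abelian groups, written additively, let $U$ be an $F$-relevant subgroup of $\mathrm{Aut}(A)$, let $N(U) = N_{\mathrm{Aut}(A)}(U)$, and let $\delta \in Z^2(U,A)$. Then restriction to $A$ defines an epimorphism \[ \eta : \mathrm{Aut}(G_\delta) \to \mathrm{Stab}_{N(U)}([\delta]),\quad \alpha \mapsto \alpha|_A, \] and $\ker(\eta) \cong Z^1(U,A)$.
   Context: $U$ acts on $A$ naturally, and $Z^1(U,A)$, $Z^2(U,A)$, $B^2(U,A)$, $H^2(U,A)$ are the groups of $1$-cocycles, $2$-cocycles, $2$-coboundaries and the second cohomology group for this action; $[\delta] = \delta + B^2(U,A)$. $G_\delta$ denotes the extension of $A$ by $U$ defined by $\delta$ (with $A$ identified with its canonical normal subgroup of $G_\delta$). The group $N(U)$ acts on $Z^2(U,A)$ by $(g(\delta))(u,v) = g\big(\delta(g^{-1}ug, g^{-1}vg)\big)$, inducing an action on $H^2(U,A)$ by $g([\delta]) = [g(\delta)]$. A subgroup $N \le \mathrm{Aut}(A)$ centralizes a series through $A$ if there is an $N$-invariant series $A = A_1 > \cdots > A_{l+1} = \{1\}$ with $N$ acting trivially on each $A_i/A_{i+1}$; $U\le\mathrm{Aut}(A)$ is $F$-relevant if no non-trivial normal subgroup of $U$ centralizes a series through $A$. *)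

From HB Require Import structures.
From mathcomp Require Import all_boot all_order all_fingroup all_solvable.
Set Implicit Arguments. Unset Strict Implicit. Unset Printing Implicit Defensive.
Import GroupScope.

Section Defs.
Variable gT : finGroupType.

(* Elements of Aut(A) are permutations u : {perm gT}, acting on
   A by evaluation u a.  MathComp's product of permutations is
   (u * v) x = v (u x), so the paper's composition u∘v ("uv") is (v * u)%g.
   A is written multiplicatively here. *)
Definition pcomp (u v : {perm gT}) : {perm gT} := (v * u)%g.

Definition is_cocycle2 (A : {set gT}) (U : {set {perm gT}})
    (d : {perm gT} -> {perm gT} -> gT) : Prop :=
  (forall u v, u \in U -> v \in U -> d u v \in A) /\
  (forall u v w, u \in U -> v \in U -> w \in U ->
     u (d v w) * d u (pcomp v w) = d (pcomp u v) w * d u v).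

Definition cobound (c : {perm gT} -> gT) (u v : {perm gT}) : gT :=
  u (c v) * (c (pcomp u v))^-1 * c u.

(* Action of N(U) on Z^2:  (g δ)(u,v) = g(δ(g^-1 u g, g^-1 v g)), where
   g^-1 u g is the composite g^-1 ∘ u ∘ g, i.e. (g * u * g^-1)%g = u ^ g^-1. *)
Definition actZ2 (g : {perm gT}) (d : {perm gT} -> {perm gT} -> gT) u v : gT :=
  g (d (u ^ g^-1) (v ^ g^-1)).

Definition fixes_class (A : {set gT}) (U : {set {perm gT}})
    (d : {perm gT} -> {perm gT} -> gT) (g : {perm gT}) : bool :=
  [exists c : {ffun {perm gT} -> gT},
     [forall u in U, c u \in A] &&
     [forall u in U, forall v in U, actZ2 g d u v == d u v * cobound c u v]].

Definition StabN (A : {set gT}) (U : {set {perm gT}})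
    (d : {perm gT} -> {perm gT} -> gT) : {set {perm gT}} :=
  [set g in 'N_(Aut A)(U) | fixes_class A U d g].

(* 1-cocycles U -> A, represented by finite functions that are 1 outside U;
   their group law is pointwise multiplication. *)
Definition Z1 (A : {set gT}) (U : {set {perm gT}}) : {set {ffun {perm gT} -> gT}} :=
  [set f : {ffun {perm gT} -> gT} |
     [&& [forall u, (u \notin U) ==> (f u == 1)],
         [forall u in U, f u \in A] &
         [forall u in U, forall v in U, f (pcomp u v) == f u * u (f v)]]].

Definition GT := (gT * {perm gT})%type.
Definition Gd (A : {set gT}) (U : {set {perm gT}}) : {set GT} := setX A U.
Definition gdmul (d : {perm gT} -> {perm gT} -> gT) (x y : GT) : GT :=
  (x.1 * x.2 y.1 * d x.2 y.2, pcomp x.2 y.2).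

Definition AutGd (A : {set gT}) (U : {set {perm gT}})
    (d : {perm gT} -> {perm gT} -> gT) : {set {perm GT}} :=
  [set f : {perm GT} | perm_on (Gd A U) f &&
     [forall x in Gd A U, forall y in Gd A U, f (gdmul d x y) == gdmul d (f x) (f y)]].

(* Canonical identification of A with the normal subgroup {(a,1)} of G_δ
   (a group isomorphism also when δ is not normalised). *)
Definition iotaA (d : {perm gT} -> {perm gT} -> gT) (a : gT) : GT :=
  (a * (d 1 1)^-1, 1).

(* Restriction to A: the automorphism g of A with α ∘ ι = ι ∘ g on A
   (defaults to 1 if no such g exists). *)
Definition restrA (A : {set gT}) (d : {perm gT} -> {perm gT} -> gT)
    (al : {perm GT}) : {perm gT} :=
  odflt 1 [pick g in Aut A | [forall a in A, al (iotaA d a) == iotaA d (g a)]].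

Definition centralizes_series (A : {group gT}) (N : {set {perm gT}}) : Prop :=
  exists s : seq {group gT},
    [/\ path (fun X Y : {group gT} =>
                (Y \proper X) && [forall n in N, forall a in X, n a * a^-1 \in Y])
             A s,
        last A s :=: 1 &
        forall X : {group gT}, X \in A :: s -> forall n, n \in N -> n @: X = X].

Definition F_relevant (A : {group gT}) (U : {group {perm gT}}) : Prop :=
  forall N : {group {perm gT}}, N <| U -> centralizes_series A N -> N :=: 1.

End Defs.

From Pilot Require Import Defs.
From HB Require Import structures.
From mathcomp Require Import all_boot all_order all_fingroup all_solvable.
Import GroupScope.

(* Let al be an automorphism of G_delta = A x U, with A identified with io A.
   The image M = al(io A) is a normal abelian subgroup of G_delta; its
   projection N to U is normal in U, and N acts trivially on C = M :&: io A
   (as M is abelian) and on A/C (as M is normal).  So N centralizes the series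
   A >= C >= 1, and F-relevance of U forces N = 1, i.e. al(io A) = io A.
   Hence al induces g in Aut(A), and then al (a, u) = (g a * t u, u ^ g) for
   the function t u = (al (1, u)).1; multiplicativity of al says that g
   normalizes U and transforms delta into delta times the coboundary of
   u |-> t (u ^ g^-1), so g lies in Stab_{N(U)}([delta]).  Conversely, for g
   in the stabilizer with witness c, (a, u) |-> (g a * c (u ^ g), u ^ g) is an
   automorphism of G_delta restricting to g.  For g = 1 the same formulas
   identify the kernel with Z^1(U, A) via al |-> t. *)

Section GroupFacts.

Set Implicit Arguments.
Unset Strict Implicit.
Unset Printing Implicit Defensive.

Variable gT : finGroupType.
Implicit Types (A C : {group gT}) (g : {perm gT}) (N : {set {perm gT}}).

Lemma bigdprod_abelian (s : seq {group gT}) A :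
  \big[dprod/1]_(H <- s) H = A -> (forall H, H \in s -> abelian H) -> abelian A.
Proof.
move=> defA abH; apply/center_idP; rewrite -(center_bigdprod defA).
by rewrite (eq_big_seq (fun H : {group gT} => (H : {set gT}))) // => H /abH/center_idP.
Qed.

Lemma autM A g a b : g \in Aut A -> a \in A -> b \in A -> g (a * b) = g a * g b.
Proof. by move=> gA; apply: (morphM (autm gA)). Qed.

Lemma autV A g a : g \in Aut A -> a \in A -> g a^-1 = (g a)^-1.
Proof. by move=> gA; apply: (morphV (autm gA)). Qed.

Lemma aut1 A g : g \in Aut A -> g 1 = 1.
Proof. by move=> gA; apply: (morph1 (autm gA)). Qed.

(* A group N of automorphisms of A that acts trivially on a subgroup C of A
   and on the quotient A/C centralizes the series A >= C >= 1; repeated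
   terms are dropped, as the series must be strictly decreasing. *)
Lemma centralizes_two_step A C N :
    N \subset Aut A -> C \subset A ->
    {in N & C, forall (n : {perm gT}) c, n c = c} ->
    {in N & A, forall (n : {perm gT}) a, n a * a^-1 \in C} ->
  centralizes_series A N.
Proof.
move=> sNAut sCA fixC fixAC.
have AutN n : n \in N -> n \in Aut A by apply: (subsetP sNAut).
have imA n : n \in N -> n @: A = A by move/AutN=> /setIdP[/im_perm_on].
have im1 n : n \in N -> n @: [1 gT] = [1 gT].
  by move=> Nn; rewrite imset_set1 (aut1 (AutN n Nn)).
have imC n : n \in N -> n @: C = C.
  move=> Nn; rewrite -[in RHS](imset_id C).
  by apply: eq_in_imset => c; apply: fixC.
have [A1 | ntA] := eqVneq (A : {set gT}) 1.
  by exists [::]; split=> // X; rewrite inE => /eqP-> n; apply: imA.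
have [C1 | ntC] := eqVneq (C : {set gT}) 1.
  exists [:: 1%G]; split=> //=.
    rewrite proper1G ntA /= andbT -C1.
    by apply/forall_inP=> n Nn; apply/forall_inP=> a; apply: fixAC.
  by move=> X; rewrite !inE => /orP[]/eqP-> n; [apply: imA | apply: im1].
have [CA | ltCA] := eqVneq (C : {set gT}) A.
  exists [:: 1%G]; split=> //=.
    rewrite proper1G ntA /= andbT; apply/forall_inP=> n Nn; apply/forall_inP=> a.
    by rewrite -CA => Ca; rewrite fixC ?mulgV ?group1.
  by move=> X; rewrite !inE => /orP[]/eqP-> n; [apply: imA | apply: im1].
exists [:: C; 1%G]; split=> //=.
  rewrite properEneq ltCA sCA proper1G ntC /=.
  apply/and3P; split=> //; apply/forall_inP=> n Nn; apply/forall_inP=> a Xa.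
    exact: fixAC.
  by rewrite fixC ?mulgV ?group1.
move=> X; rewrite !inE => /or3P[]/eqP-> n; [apply: imA | apply: imC | apply: im1].
Qed.

End GroupFacts.

Section Extension.

Set Implicit Arguments.
Unset Strict Implicit.
Unset Printing Implicit Defensive.

Variables (gT : finGroupType) (A : {group gT}) (U : {group {perm gT}}).
Variable d : {perm gT} -> {perm gT} -> gT.
Hypotheses (abA : abelian A) (sUAut : U \subset Aut A) (d_cocycle : is_cocycle2 A U d).
Hypothesis U_relevant : F_relevant A U.
Implicit Types (u v w : {perm gT}) (a b z : gT) (x y : GT gT).

Local Notation G := (Gd A U).
Local Notation mul := (gdmul d).
Local Notation io := (iotaA d).
Local Notation e := (d 1 1).

Lemma mulgAC a b : a \in A -> b \in A -> a * b = b * a.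
Proof. by move/(centsP abA)=> /[apply]. Qed.

Lemma mulgCA a b : a \in A -> b \in A -> forall z, a * (b * z) = b * (a * z).
Proof. by move=> Aa Ab z; rewrite !mulgA (mulgAC Aa Ab). Qed.

Lemma U_Aut u : u \in U -> u \in Aut A.
Proof. exact: subsetP. Qed.

Lemma U_act u a : u \in U -> a \in A -> u a \in A.
Proof. by move=> /U_Aut uA Aa; apply: (Aut_closed uA). Qed.

Lemma cocycle_in u v : u \in U -> v \in U -> d u v \in A.
Proof. by case: d_cocycle => dA _; apply: dA. Qed.

Lemma cocycleE u v w : u \in U -> v \in U -> w \in U ->
  u (d v w) * d u (Defs.pcomp v w) = d (Defs.pcomp u v) w * d u v.
Proof. by case: d_cocycle => _; apply. Qed.

Lemma pcomp_in u v : u \in U -> v \in U -> Defs.pcomp u v \in U.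
Proof. by move=> Uu Uv; rewrite groupM. Qed.

Lemma pcomp1u u : Defs.pcomp 1 u = u. Proof. by rewrite /Defs.pcomp mulg1. Qed.
Lemma pcompu1 u : Defs.pcomp u 1 = u. Proof. by rewrite /Defs.pcomp mul1g. Qed.

Lemma cocycle1u u : u \in U -> d 1 u = e.
Proof.
by move=> Uu; move: (cocycleE (group1 U) (group1 U) Uu); rewrite perm1 !pcomp1u => /mulgI.
Qed.

Lemma cocycleu1 u : u \in U -> d u 1 = u e.
Proof.
by move=> Uu; move: (cocycleE Uu (group1 U) (group1 U)); rewrite pcomp1u pcompu1 => /mulIg/esym.
Qed.

Lemma GdP x : reflect (x.1 \in A /\ x.2 \in U) (x \in G).
Proof. by case: x => a u; rewrite /Gd in_setX; apply: andP. Qed.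

Lemma Gd_pair a u : a \in A -> u \in U -> (a, u) \in G.
Proof. by move=> Aa Uu; apply/GdP. Qed.

Lemma Gd_mul x y : x \in G -> y \in G -> mul x y \in G.
Proof.
by move=> /GdP[Ax Ux] /GdP[Ay Uy]; apply/GdP; rewrite /= !groupM ?U_act ?cocycle_in.
Qed.

Lemma iota_in a : a \in A -> io a \in G.
Proof. by move=> Aa; apply: Gd_pair; rewrite ?groupM ?groupV ?cocycle_in. Qed.

Lemma iota_inj : injective io.
Proof. by move=> a b [] /mulIg. Qed.

Lemma iota_mull z x : x \in G -> mul (io z) x = (z * x.1, x.2).
Proof.
case/GdP=> Ax Ux; rewrite /gdmul /= perm1 pcomp1u cocycle1u //.
by rewrite -!mulgA (mulgAC Ax) ?cocycle_in ?mulKg.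
Qed.

Lemma iota_morph a b : a \in A -> b \in A -> mul (io a) (io b) = io (a * b).
Proof. by move=> Aa Ab; rewrite iota_mull ?iota_in //= mulgA. Qed.

Lemma iota_mulr x a : x \in G -> a \in A -> mul x (io a) = mul (io (x.2 a)) x.
Proof.
move=> Gx Aa; rewrite iota_mull //; case/GdP: Gx => Ax Ux.
have Ae : e \in A by rewrite cocycle_in.
rewrite /gdmul /= (cocycleu1 Ux) pcompu1 (autM (U_Aut Ux)) ?groupV //.
by rewrite (autV (U_Aut Ux)) // -mulgA mulgKV (mulgAC Ax) ?U_act.
Qed.

Lemma Gd_idem x : x \in G -> mul x x = x -> x = io 1.
Proof.
case: x => a u /GdP[/= Aa Uu] [Ea Eu].
have u1 : u = 1 by apply: (mulIg u); rewrite mul1g.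
move: Ea; rewrite u1 perm1 -mulgA => /(canRL (mulKg a)).
by rewrite mulVg => /(canRL (mulgK e)) ->; rewrite /iotaA !mul1g.
Qed.

Lemma restrA_eq (al : {perm GT gT}) g :
  g \in Aut A -> {in A, forall a, al (io a) = io (g a)} -> restrA A d al = g.
Proof.
move=> gA alg; rewrite /restrA; case: pickP => [h /andP[hA /forall_inP alh] | noh] /=.
  apply: (eq_Aut hA gA) => a Aa; apply: iota_inj.
  by rewrite -(eqP (alh a Aa)) alg.
by case/andP: (negbT (noh g)); split=> //; apply/forall_inP=> a Aa; rewrite alg.
Qed.

Lemma AutGd_perm_in (f : GT gT -> GT gT)
    (f_inj : {in G &, injective f}) (f_in : f @: G \subset G) :
    {in G &, forall x y, f (mul x y) = mul (f x) (f y)} ->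
  perm_in f_inj f_in \in AutGd A U d.
Proof.
move=> fM; rewrite inE perm_in_on /=.
apply/forall_inP=> x Gx; apply/forall_inP=> y Gy.
by rewrite !perm_inE ?Gd_mul ?fM ?perm_inE.
Qed.


Section Restriction.

Variable al : {perm GT gT}.
Hypothesis alAut : al \in AutGd A U d.
Implicit Types (m : GT gT).

Lemma al_on : perm_on G al.
Proof. by move: alAut; rewrite inE => /andP[]. Qed.

Lemma al_mul x y : x \in G -> y \in G -> al (mul x y) = mul (al x) (al y).
Proof.
move: alAut; rewrite inE => /andP[_ /forall_inP alM] Gx Gy.
by apply/eqP; move/forall_inP: (alM x Gx); apply.
Qed.

Lemma al_in x : (al x \in G) = (x \in G).
Proof. exact: perm_closed al_on. Qed.

Lemma al_onto y : y \in G -> exists2 x, x \in G & al x = y.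
Proof. by move=> Gy; exists (al^-1 y); rewrite ?permKV // -al_in permKV. Qed.

(* al fixes the identity, the unique idempotent of G_delta. *)
Lemma al_iota1 : al (io 1) = io 1.
Proof.
apply: Gd_idem; first by rewrite al_in iota_in.
by rewrite -al_mul ?iota_in // iota_morph // mulg1.
Qed.

Definition imgA : {set GT gT} := [set al (io a) | a in A].

Lemma imgA_in m : m \in imgA -> m \in G.
Proof. by case/imsetP=> a Aa ->; rewrite al_in iota_in. Qed.

Lemma imgA_iota a : a \in A -> al (io a) \in imgA.
Proof. exact: imset_f. Qed.

Lemma imgA_mul m1 m2 : m1 \in imgA -> m2 \in imgA -> mul m1 m2 \in imgA.
Proof.
case/imsetP=> a Aa -> /imsetP[b Ab ->].
by rewrite -al_mul ?iota_in // iota_morph // imgA_iota ?groupM.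
Qed.

Lemma imgA_comm m1 m2 : m1 \in imgA -> m2 \in imgA -> mul m1 m2 = mul m2 m1.
Proof.
case/imsetP=> a Aa -> /imsetP[b Ab ->].
by rewrite -!al_mul ?iota_in // !iota_morph // (mulgAC Aa Ab).
Qed.

(* M is normal in G_delta, being the image of a normal subgroup. *)
Lemma imgA_normal y m : y \in G -> m \in imgA ->
  exists2 m', m' \in imgA & mul y m = mul m' y.
Proof.
move=> Gy /imsetP[a Aa ->]; have [x /[dup] Gx /GdP[_ Ux] <-] := al_onto Gy.
exists (al (io (x.2 a))); first by rewrite imgA_iota ?U_act.
by rewrite -!al_mul ?iota_in ?U_act ?iota_mulr.
Qed.

Lemma imgA_div z m : z \in A -> m \in imgA -> mul (io z) m \in imgA -> io z \in imgA.
Proof.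
move=> Az /imsetP[b Ab ->] /imsetP[b' Ab'].
have [[x1 x2] Gx alx] := al_onto (iota_in Az).
rewrite -alx -al_mul ?iota_in // => /perm_inj.
rewrite iota_mulr ?iota_mull ?iota_in //= => -[Ex1 Ex2].
move: Ex1; rewrite Ex2 perm1 => /(canRL (mulKg b)) Ex1.
apply/imsetP; exists (b^-1 * b'); first by rewrite groupM ?groupV.
by rewrite /iotaA Ex1 mulgA.
Qed.

Definition imgA_U : {set {perm gT}} := [set m.2 | m in imgA].

Lemma imgA_U_group_set : group_set imgA_U.
Proof.
apply/group_setP; split; first by apply/imsetP; exists (io 1); rewrite // -al_iota1 imgA_iota.
move=> _ _ /imsetP[m1 Mm1 ->] /imsetP[m2 Mm2 ->].
by apply/imsetP; exists (mul m2 m1); rewrite ?imgA_mul.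
Qed.

Canonical imgA_U_group := group imgA_U_group_set.

Lemma imgA_U_normal : imgA_U_group <| U.
Proof.
apply/andP; split; first by apply/subsetP=> _ /imsetP[m /imgA_in/GdP[_ Um] ->].
apply/subsetP=> u Uu; rewrite inE; apply/subsetP=> _ /imsetP[n /imsetP[m Mm ->] ->].
have [m' Mm' /(congr1 snd)] := imgA_normal (Gd_pair (group1 A) Uu) Mm.
rewrite /= /Defs.pcomp => Em'; apply/imsetP; exists m' => //.
by rewrite conjgE Em' mulKg.
Qed.

Definition imgA_A : {set gT} := [set a in A | io a \in imgA].

Lemma imgA_A_group_set : group_set imgA_A.
Proof.
apply/group_setP; split; first by rewrite inE group1 -{1}al_iota1 imgA_iota.
move=> a b /setIdP[Aa Ma] /setIdP[Ab Mb].
by rewrite inE groupM // -iota_morph ?imgA_mul.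
Qed.

Canonical imgA_A_group := group imgA_A_group_set.

Lemma imgA_A_sub : imgA_A \subset A.
Proof. by apply/subsetP=> a /setIdP[]. Qed.

(* N acts trivially on C, because M is abelian ... *)
Lemma imgA_U_fix : {in imgA_U & imgA_A, forall (n : {perm gT}) c, n c = c}.
Proof.
move=> _ c /imsetP[m Mm ->] /setIdP[Ac Mc].
have := imgA_comm Mm Mc; rewrite iota_mulr ?imgA_in // !iota_mull ?imgA_in //.
by case=> /mulIg.
Qed.

(* ... and trivially on A/C, because M is normal. *)
Lemma imgA_U_fix_quo : {in imgA_U & A, forall (n : {perm gT}) a, n a * a^-1 \in imgA_A}.
Proof.
move=> _ a /imsetP[m Mm ->] Aa.
have /GdP[Am Um] := imgA_in Mm.
have Ama : m.2 a \in A by rewrite U_act.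
have [m' Mm' Em'] := imgA_normal (iota_in Aa) Mm.
move: Em'; rewrite iota_mulr ?imgA_in // !iota_mull ?imgA_in //.
case: m' Mm' => m1' m2' Mm' /= [E1 E2].
have Eiota : mul (io (a * (m.2 a)^-1)) m = (m1', m2').
  rewrite iota_mull ?imgA_in //= -E2; congr pair.
  move/esym: E1; rewrite -E2 => /(canRL (mulKg _)) ->.
  by rewrite mulgA (mulgAC Aa) ?groupV.
have Cq : a * (m.2 a)^-1 \in imgA_A.
  by rewrite inE groupM ?groupV // (imgA_div _ Mm) ?Eiota // groupM ?groupV.
by move/(@groupVr _ imgA_A_group): Cq; rewrite invMg invgK.
Qed.

(* Hence N centralizes a series through A, and F-relevance forces N = 1:
   al maps io A into io A. *)
Lemma imgA_U_centralizes : centralizes_series A imgA_U.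
Proof.
apply: (centralizes_two_step _ imgA_A_sub imgA_U_fix imgA_U_fix_quo).
by apply: subset_trans sUAut; case/andP: imgA_U_normal.
Qed.

Lemma al_iota2 a : a \in A -> (al (io a)).2 = 1.
Proof.
move=> Aa; have N1 := U_relevant imgA_U_normal imgA_U_centralizes.
have : (al (io a)).2 \in imgA_U by rewrite imset_f ?imgA_iota.
by rewrite N1 => /set1P.
Qed.

Definition restr_fun a : gT := (al (io a)).1 * e.

Lemma al_iotaE a : a \in A -> al (io a) = io (restr_fun a).
Proof.
move=> Aa; rewrite /restr_fun /iotaA mulgK.
by case: (al (io a)) (al_iota2 Aa) => y w /= ->.
Qed.

Lemma restr_fun_in a : a \in A -> restr_fun a \in A.
Proof.
move=> Aa; have /GdP[Aal _] := imgA_in (imgA_iota Aa).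
by rewrite groupM ?cocycle_in.
Qed.

Lemma restr_fun_inj : {in A &, injective restr_fun}.
Proof.
move=> a b Aa Ab Eab; apply: iota_inj; apply: (@perm_inj _ al).
by rewrite !al_iotaE // Eab.
Qed.

Lemma restr_fun_sub : restr_fun @: A \subset A.
Proof. by apply/subsetP=> _ /imsetP[a Aa ->]; apply: restr_fun_in. Qed.

Definition restr : {perm gT} := perm_in restr_fun_inj restr_fun_sub.

Lemma restr_Aut : restr \in Aut A.
Proof.
rewrite inE perm_in_on /=; apply/morphicP=> a b Aa Ab.
rewrite !perm_inE ?groupM //; apply: iota_inj.
rewrite -(al_iotaE (groupM Aa Ab)) -iota_morph // al_mul ?iota_in //.
by rewrite !al_iotaE // iota_morph ?restr_fun_in.
Qed.

Lemma restrA_spec :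
  restrA A d al \in Aut A /\ {in A, forall a, al (io a) = io (restrA A d al a)}.
Proof.
have alE : {in A, forall a, al (io a) = io (restr a)}.
  by move=> a Aa; rewrite perm_inE ?al_iotaE.
by rewrite (restrA_eq restr_Aut alE); split; [apply: restr_Aut | apply: alE].
Qed.

Local Notation g := (restrA A d al).

Lemma restrA_Aut : g \in Aut A.
Proof. by case: restrA_spec. Qed.

Lemma al_iota a : a \in A -> al (io a) = io (g a).
Proof. by case: restrA_spec => _; apply. Qed.

(* Since al transports conjugation on io A, it conjugates U-parts by g. *)
Lemma al_conj x : x \in G -> (al x).2 = x.2 ^ g.
Proof.
move=> Gx; have Galx : al x \in G by rewrite al_in.
have /GdP[_ Ux] := Gx; have /GdP[_ Ualx] := Galx.
have act a : a \in A -> (al x).2 (g a) = g (x.2 a).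
  move=> Aa; have := congr1 al (iota_mulr Gx Aa).
  rewrite !al_mul ?iota_in ?U_act // !al_iota ?U_act //.
  by rewrite iota_mulr ?(Aut_closed restrA_Aut) // !iota_mull // => -[/mulIg].
apply: (eq_Aut (U_Aut Ualx)); first by rewrite groupJ ?restrA_Aut ?U_Aut.
move=> b Ab; have Ab' : g^-1 b \in A by rewrite (Aut_closed _ Ab) ?groupV ?restrA_Aut.
by rewrite conjgE !permM -{1}(permKV g b) act.
Qed.

Definition al_trans u : gT := (al (1, u)).1.

Lemma al_section u : u \in U -> al (1, u) = (al_trans u, u ^ g).
Proof.
by move=> Uu; rewrite -(al_conj (Gd_pair (group1 A) Uu)) /al_trans; case: (al _).
Qed.

Lemma al_trans_in u : u \in U -> al_trans u \in A.
Proof.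
by move=> Uu; have /GdP[] : al (1, u) \in G by rewrite al_in Gd_pair.
Qed.

Lemma conj_restrA_in u : u \in U -> u ^ g \in U.
Proof.
move=> Uu; have /GdP[_] : al (1, u) \in G by rewrite al_in Gd_pair.
by rewrite al_section.
Qed.

Lemma al_pair a u : a \in A -> u \in U -> al (a, u) = (g a * al_trans u, u ^ g).
Proof.
move=> Aa Uu; have Gu := Gd_pair (group1 A) Uu.
have -> : (a, u) = mul (io a) (1, u) by rewrite iota_mull //= mulg1.
rewrite al_mul ?iota_in // al_iota // al_section // iota_mull //.
by rewrite Gd_pair ?al_trans_in ?conj_restrA_in.
Qed.

(* Multiplicativity of al on section elements: al_trans measures the
   difference between the g-transported cocycle and d. *)
Lemma al_trans_cocycle u v : u \in U -> v \in U ->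
  g (d u v) * al_trans (Defs.pcomp u v) =
  al_trans u * (u ^ g) (al_trans v) * d (u ^ g) (v ^ g).
Proof.
move=> Uu Uv; have Gu := Gd_pair (group1 A) Uu; have Gv := Gd_pair (group1 A) Uv.
have Euv : mul (1, u) (1, v) = (d u v, Defs.pcomp u v).
  by rewrite /gdmul /= (aut1 (U_Aut Uu)) !mul1g.
have := al_mul Gu Gv; rewrite Euv al_pair ?cocycle_in ?pcomp_in //.
by rewrite !al_section // => -[].
Qed.

Lemma restrA_norm : g \in 'N(U).
Proof.
rewrite inE; apply/subsetP=> u; rewrite mem_conjg => Uu.
by rewrite -(conjgKV g u) conj_restrA_in.
Qed.

(* g fixes the class of d: conjugating by g changes d by the coboundary of
   u |-> al_trans (u ^ g^-1). *)
Lemma restrA_Stab : g \in StabN A U d.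
Proof.
have UgV u : u \in U -> u ^ g^-1 \in U by move=> Uu; rewrite memJ_norm ?groupV ?restrA_norm.
rewrite inE in_setI restrA_Aut restrA_norm /=.
apply/existsP; exists [ffun u => al_trans (u ^ g^-1)]; apply/andP; split.
  by apply/forall_inP=> u Uu; rewrite ffunE al_trans_in ?UgV.
apply/forall_inP=> u' Uu'; apply/forall_inP=> v' Uv'.
rewrite /actZ2 /cobound !ffunE.
have -> : Defs.pcomp u' v' ^ g^-1 = Defs.pcomp (u' ^ g^-1) (v' ^ g^-1).
  by rewrite /Defs.pcomp conjMg.
have [Uu Uv] := (UgV u' Uu', UgV v' Uv').
move: (u' ^ g^-1) (v' ^ g^-1) Uu Uv (conjgKV g u') (conjgKV g v').
move=> u v Uu Uv <- <-.
have Atu := al_trans_in Uu.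
have Atv' : (u ^ g) (al_trans v) \in A by rewrite U_act ?conj_restrA_in ?al_trans_in.
have Ad' : d (u ^ g) (v ^ g) \in A by rewrite cocycle_in ?conj_restrA_in.
apply/eqP; rewrite (canRL (mulgK _) (al_trans_cocycle Uu Uv)).
rewrite (mulgAC (groupM Atu Atv') Ad') -!mulgA; congr (_ * _).
by rewrite mulgA (mulgAC Atu Atv') -!mulgA (mulgAC Atu) ?groupV ?al_trans_in ?pcomp_in.
Qed.

End Restriction.

Lemma restrA_morph : {in AutGd A U d &, {morph restrA A d : x y / x * y}}.
Proof.
move=> al be alAut beAut /=; apply: restrA_eq; first by rewrite groupM ?restrA_Aut.
move=> a Aa; rewrite permM al_iota // (al_iota beAut) ?permM //.
exact: (Aut_closed (restrA_Aut alAut)).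
Qed.

Section Lift.

Variables (g : {perm gT}) (c : {perm gT} -> gT).
Hypotheses (gAut : g \in Aut A) (gN : g \in 'N(U)) (cA : forall u, u \in U -> c u \in A).
Hypothesis g_d : {in U &, forall u v, actZ2 g d u v = d u v * cobound c u v}.

Lemma conj_in u : u \in U -> u ^ g \in U.
Proof. by move=> Uu; rewrite memJ_norm. Qed.

Definition lift_fun (x : GT gT) : GT gT := (g x.1 * c (x.2 ^ g), x.2 ^ g).

Lemma lift_fun_inj : {in G &, injective lift_fun}.
Proof.
by move=> [a u] [b v] _ _ [] /[swap] /conjg_inj <- /mulIg /perm_inj <-.
Qed.

Lemma lift_fun_sub : lift_fun @: G \subset G.
Proof.
apply/subsetP=> _ /imsetP[[a u] /GdP[/= Aa Uu] ->].
by rewrite /lift_fun /= Gd_pair ?conj_in // groupM ?cA ?conj_in // (Aut_closed gAut).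
Qed.

Definition lift : {perm GT gT} := perm_in lift_fun_inj lift_fun_sub.

Lemma lift_mul : {in G &, forall x y, lift_fun (mul x y) = mul (lift_fun x) (lift_fun y)}.
Proof.
move=> [a u] [b v] /GdP[/= Aa Uu] /GdP[/= Ab Uv].
have [Uu' Uv'] := (conj_in Uu, conj_in Uv).
rewrite /lift_fun /gdmul /= {1}/Defs.pcomp conjMg; congr pair.
have Eact : (u ^ g) (g b) = g (u b) by rewrite conjgE !permM permK.
have := g_d Uu' Uv'; rewrite /actZ2 !conjgK => Ed.
rewrite (autM (U_Aut Uu')) ?(Aut_closed gAut) ?cA // Eact.
rewrite !(autM gAut) ?groupM ?U_act ?cocycle_in // Ed /cobound.
have AP : (u ^ g) (c (v ^ g)) \in A by rewrite U_act ?cA.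
have AQ := cA (pcomp_in Uu' Uv').
have AD : d (u ^ g) (v ^ g) \in A by rewrite cocycle_in.
have AR := cA Uu'.
have AY : g (u b) \in A by rewrite (Aut_closed gAut) ?U_act.
rewrite -/(Defs.pcomp (u ^ g) (v ^ g)) -!mulgA (mulgAC AR AQ) mulKg; congr (_ * _).
rewrite (mulgCA AR AY); congr (_ * _).
by rewrite (mulgCA AR AP) (mulgCA AD AP) (mulgAC AR AD).
Qed.

Lemma lift_Aut : lift \in AutGd A U d.
Proof. exact: AutGd_perm_in lift_mul. Qed.

(* On io A the lift acts through g: the hypothesis at u = v = 1 says that
   g (d 1 1) = d 1 1 * c 1. *)
Lemma restrA_lift : restrA A d lift = g.
Proof.
apply: restrA_eq => // a Aa; rewrite perm_inE ?iota_in // /lift_fun /= conj1g.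
have := g_d (group1 U) (group1 U).
rewrite /actZ2 /cobound conj1g perm1 pcomp1u mulgV mul1g => Ee.
have Ae : d 1 1 \in A by rewrite cocycle_in.
rewrite /iotaA (autM gAut) ?groupV // (autV gAut) // Ee invMg.
by rewrite -!mulgA (mulgAC (groupVr Ae) (cA (group1 U))) mulKg.
Qed.

End Lift.

Lemma StabN_sub_restrA : StabN A U d \subset restrA A d @: AutGd A U d.
Proof.
apply/subsetP=> g /setIdP[/setIP[gAut gN] /existsP[c /andP[/forall_inP cA /forall_inP g_d]]].
have g_d' : {in U &, forall u v, actZ2 g d u v = d u v * cobound c u v}.
  by move=> u v Uu Uv; apply/eqP; move/forall_inP: (g_d u Uu); apply.
by apply/imsetP; exists (lift gAut gN cA); rewrite ?lift_Aut ?restrA_lift.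
Qed.

Definition restrA_ker : {set {perm GT gT}} := [set al in AutGd A U d | restrA A d al == 1].

Definition ker_cocycle (al : {perm GT gT}) : {ffun {perm gT} -> gT} :=
  [ffun u => if u \in U then al_trans al u else 1].

Lemma restrA_kerP al : reflect (al \in AutGd A U d /\ restrA A d al = 1) (al \in restrA_ker).
Proof. by apply: (iffP setIdP) => -[alAut /eqP E]. Qed.

Lemma ker_pair al a u : al \in restrA_ker -> a \in A -> u \in U ->
  al (a, u) = (a * al_trans al u, u).
Proof. by case/restrA_kerP=> alAut al1 Aa Uu; rewrite al_pair // al1 perm1 conjg1. Qed.

Lemma ker_cocycle_Z1 al : al \in restrA_ker -> ker_cocycle al \in Z1 A U.
Proof.
case/restrA_kerP=> alAut al1; rewrite inE; apply/and3P; split.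
- by apply/forallP=> u; apply/implyP=> Uu; rewrite ffunE (negbTE Uu).
- by apply/forall_inP=> u Uu; rewrite ffunE Uu al_trans_in.
apply/forall_inP=> u Uu; apply/forall_inP=> v Uv; rewrite !ffunE Uu Uv pcomp_in //.
have := al_trans_cocycle alAut Uu Uv; rewrite al1 perm1 !conjg1.
by rewrite (mulgAC (cocycle_in Uu Uv)) ?al_trans_in ?pcomp_in // => /mulIg ->.
Qed.

Lemma ker_cocycle_inj : {in restrA_ker &, injective ker_cocycle}.
Proof.
move=> al be alK beK Eab; apply/permP=> x.
have [/GdP[Ax Ux] | Gx] := boolP (x \in G).
  case: x Ax Ux => a u /= Aa Uu; rewrite !ker_pair //.
  by move/ffunP/(_ u): Eab; rewrite !ffunE Uu => ->.
case/restrA_kerP: alK => alAut _; case/restrA_kerP: beK => beAut _.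
by rewrite !(out_perm (al_on _)).
Qed.

Lemma ker_cocycle_mul : {in restrA_ker &, forall al be,
  ker_cocycle (al * be) = [ffun u => ker_cocycle al u * ker_cocycle be u]}.
Proof.
move=> al be alK beK; apply/ffunP=> u; rewrite !ffunE.
have [Uu | _] := boolP (u \in U); last by rewrite mulg1.
case/restrA_kerP: (alK) => alAut _.
by rewrite /al_trans permM ker_pair ?group1 // ker_pair ?mul1g ?al_trans_in.
Qed.

(* ... and it is onto: each f in Z^1(U, A) gives the kernel element lifting g = 1
   with c = f: the 1-cocycle identity says exactly that cobound f = 1. *)
Lemma Z1_sub_ker_cocycle : Z1 A U \subset ker_cocycle @: restrA_ker.
Proof.
apply/subsetP=> f; rewrite inE => /and3P[/forallP f1 /forall_inP fA /forall_inP fZ].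
have g_d : {in U &, forall u v, actZ2 1 d u v = d u v * cobound f u v}.
  move=> u v Uu Uv; rewrite /actZ2 /cobound invg1 !conjg1 perm1.
  by rewrite (eqP (forall_inP (fZ u Uu) v Uv)) invMg mulKVg mulVg mulg1.
set al := lift (group1 _) (group1 _) fA.
have alAut : al \in AutGd A U d := lift_Aut (group1 _) (group1 _) fA g_d.
apply/imsetP; exists al; first by apply/restrA_kerP; rewrite restrA_lift.
apply/ffunP=> u; rewrite ffunE; case: ifP => [Uu | nUu]; last first.
  by apply/eqP/(implyP (f1 u)); rewrite nUu.
by rewrite /al_trans /al /lift perm_inE ?Gd_pair //= conjg1 perm1 mul1g.
Qed.

End Extension.

Theorem theorem3p6 (gT : finGroupType) (A : {group gT}) (U : {group {perm gT}})
    (d : {perm gT} -> {perm gT} -> gT)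
    (hA : exists2 s : seq {group gT},
            \big[dprod/1]_(H <- s) H = A & forall H, H \in s -> exists p, p.-abelem H)
    (hUA : U \subset Aut A) (hF : F_relevant A U) (hd : is_cocycle2 A U d) :
  [/\ (* restriction to A is well defined and lands in Aut(A) *)
      forall al, al \in AutGd A U d ->
        restrA A d al \in Aut A /\
        forall a, a \in A -> al (iotaA d a) = iotaA d (restrA A d al a),
      (* it is a homomorphism ... *)
      {in AutGd A U d &, {morph restrA A d : x y / x * y}},
      (* ... onto Stab_{N(U)}([δ]) *)
      restrA A d @: AutGd A U d = StabN A U d &
      (* ker(eta) ≅ Z^1(U,A) *)
      exists phi : {perm GT gT} -> {ffun {perm gT} -> gT},
        let K := [set al in AutGd A U d | restrA A d al == 1] in
        [/\ {in K, forall al, phi al \in Z1 A U},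
            {in K &, injective phi},
            Z1 A U \subset phi @: K &
            {in K &, forall al be, phi (al * be) = [ffun u => phi al u * phi be u]}]].
Proof.
have abA : abelian A.
  case: hA => s defA abelem_s; apply: (bigdprod_abelian defA) => H /abelem_s[p].
  exact: abelem_abelian.
split.
- exact: restrA_spec abA hUA hd hF.
- exact: restrA_morph abA hUA hd hF.
- apply/eqP; rewrite eqEsubset StabN_sub_restrA // andbT.
  by apply/subsetP=> _ /imsetP[al alAut ->]; apply: restrA_Stab.
exists (ker_cocycle U); split.
- exact: ker_cocycle_Z1 abA hUA hd hF.
- exact: ker_cocycle_inj abA hUA hd hF.
- exact: Z1_sub_ker_cocycle abA hUA hd.
- exact: ker_cocycle_mul abA hUA hd hF.
Qed.
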